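(* For the scaled single-server CDN described in the context, $$\lim_{c\to\infty}\frac1c J_1^c=\lim_{c\to\infty}\frac1c J_{ub}^c,$$ where $J_1^c$ is the throughput of the scaled system and $J_{ub}^c=\min\big(\lambda^c(0),\mu^c\big)$.
   Context: A single surrogate server in a planar network region $G$ of area $\mathcal{A}$ serves requests first-come-first-served with exponential service rate $\mu^c=c\mu$, where $c\ge1$ is a scaling factor. Requests arrive as a Poisson process of rate $\lambda^c=c\lambda$ with locations uniform on $G$; the disc of radius $\psi$ around the server lies in $G$; $\mathcal{A}$ and the latency bound $\psi>0$ do not depend on $c$. A request arriving when the server holds $n$ requests is routed to it iff its location is within distance $\psi-(n+1)/\mu^c$ of the server. Thus the number of requests is a birth–death chain on $\{0,\dots,N^c\}$, $N^c=\lceil\psi c\mu-1\rceil$, with death rate $\mu^c$ and birth rate $\lambda^c(n)=\frac{c\lambda}{\mathcal{A}}\pi\big(\psi-\frac{n+1}{c\mu}\big)^2$ for $n<N^c$ ($0$ at $N^c$). The throughput $J_1^c$ is the long-run rate of served requests. *)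

From HB Require Import structures.
From mathcomp Require Import all_boot all_order all_algebra.
From mathcomp Require Import all_classical all_reals all_analysis.
Set Implicit Arguments. Unset Strict Implicit. Unset Printing Implicit Defensive.
Import Order.TTheory GRing.Theory Num.Theory.
Import numFieldNormedType.Exports.
Local Open Scope ring_scope.

Section CDN.
Variable R : realType.
(* parameters: arrival rate lam, service rate mu, area A, latency bound psi,
   scaling factor c *)
Variables (lam mu A psi : R).

Definition capN (c : R) : nat :=
  let x := psi * c * mu - 1 in
  if 0 < x then `|Num.ceil x|%N else 0%N.

Definition lamc (c : R) : R := c * lam.
Definition muc (c : R) : R := c * mu.

Definition birth (c : R) (n : nat) : R :=
  if (n < capN c)%N
  then lamc c / A * pi * (psi - n.+1%:R / muc c) ^+ 2
  else 0.

Definition death (c : R) (n : nat) : R := if (0 < n)%N then muc c else 0.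

(* p is a stationary distribution of the birth-death chain on {0,...,N^c}:
   a probability vector satisfying the global balance equations p Q = 0. *)
Definition stationary (c : R) (p : nat -> R) : Prop :=
  (forall n, (n <= capN c)%N -> 0 <= p n) /\
  \sum_(0 <= n < (capN c).+1) p n = 1 /\
  (forall n, (n <= capN c)%N ->
     p n * (birth c n + death c n) =
       (if n is m.+1 then p m * birth c m else 0)
       + (if (n < capN c)%N then p n.+1 * death c n.+1 else 0)).

(* throughput J_1^c: long-run rate of served requests = mu^c P(server busy)
   under the stationary distribution p *)
Definition throughput (c : R) (p : nat -> R) : R :=
  muc c * \sum_(1 <= n < (capN c).+1) p n.

Definition Jub (c : R) : R := Num.min (birth c 0) (muc c).

End CDN.

From HB Require Import structures.
From mathcomp Require Import all_boot all_order all_algebra.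
From mathcomp Require Import all_classical all_reals all_analysis.
From mathcomp Require Import ring lra.
Set Implicit Arguments. Unset Strict Implicit. Unset Printing Implicit Defensive.
Import Order.TTheory GRing.Theory Num.Theory.
Import numFieldNormedType.Exports.
Local Open Scope classical_set_scope.
Local Open Scope ring_scope.

(* Global balance of the birth-death chain reduces to detailed balance
   p(n+1) mu^c = p(n) lambda^c(n), so the throughput mu^c P(n >= 1) equals
   sum_n p(n) lambda^c(n), which is at most min(c lambda pi psi^2 / A, mu^c).
   Conversely lambda^c(n) >= c lambda pi psi^2 / A - O(K) for n < K, hence
   p(n+1) >= q p(n) there with q ~ min(lambda pi psi^2 / A, mu) / mu; comparing
   1 - p(m) with P(n >= 1) for each m < K and averaging over m gives
   P(n >= 1) >= q (1 - 1/K).  Letting c -> oo and then K -> oo squeezes J_1^c / c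
   onto min(lambda pi psi^2 / A, mu), which is also the limit of J_ub^c / c. *)

Lemma sum_nat_bump (V : nmodType) (f : nat -> V) (N m : nat) : (m <= N)%N ->
  \sum_(0 <= n < N.+1) f n = f m + \sum_(0 <= n < N) f (bump m n).
Proof.
by rewrite -ltnS => mN; rewrite !big_mkord (bigD1_ord (Ordinal mN)) //=.
Qed.

Lemma detailed_balance (R : pzRingType) (u b d : nat -> R) (N : nat) :
  d 0%N = 0 ->
  (forall n, (n <= N)%N -> u n * (b n + d n) =
     (if n is m.+1 then u m * b m else 0)
     + (if (n < N)%N then u n.+1 * d n.+1 else 0)) ->
  forall n, (n < N)%N -> u n.+1 * d n.+1 = u n * b n.
Proof.
move=> d0 balance; elim=> [|n IH] nN.
  by have := balance 0%N (ltnW nN); rewrite nN d0 addr0 add0r => ->.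
have := balance n.+1 (ltnW nN); rewrite nN -IH ?(ltnW nN) // mulrDr.
by rewrite [in X in X = _]addrC => /addrI ->.
Qed.

Section ProbabilityVector.
Variables (R : realFieldType) (u : nat -> R) (N : nat).
Hypotheses (u_ge0 : forall n, (n <= N)%N -> 0 <= u n)
           (u_sum1 : \sum_(0 <= n < N.+1) u n = 1).

Lemma sum_prefix_le1 K : (K <= N.+1)%N -> \sum_(0 <= n < K) u n <= 1.
Proof.
move=> KN; rewrite -u_sum1 (big_cat_nat (leq0n K) KN) /= lerDl.
by rewrite big_nat_cond sumr_ge0 // => n /andP[/andP[_ /u_ge0]].
Qed.

Lemma sum_tailE : \sum_(1 <= n < N.+1) u n = 1 - u 0%N.
Proof. by rewrite -u_sum1 [in RHS]big_ltn // addrC addKr. Qed.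

Lemma sum_tail_ge_skip (q : R) m : q <= 1 -> (m <= N)%N ->
  (forall n, (n < m)%N -> q * u n <= u n.+1) ->
  q * (1 - u m) <= \sum_(1 <= n < N.+1) u n.
Proof.
(* Drop state m and send every other state n to n + 1 if n < m, to itself if n > m. *)
move=> q1 mN qu; rewrite -[in 1 - _]u_sum1 (sum_nat_bump u mN) addrC addrK.
rewrite big_add1 /= mulr_sumr; apply: ler_sum_nat => n /andP[_ nN] /=.
rewrite /bump; case: leqP => [mn | nm]; last by rewrite add0n qu.
by rewrite add1n ler_piMl // u_ge0.
Qed.

Lemma sum_tail_ge (q : R) K : 0 <= q <= 1 -> (0 < K <= N)%N ->
  (forall n, (n < K)%N -> q * u n <= u n.+1) ->
  q * (1 - K%:R^-1) <= \sum_(1 <= n < N.+1) u n.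
Proof.
move=> /andP[q0 q1] /andP[K0 KN] qu; set T := \sum_(1 <= n < N.+1) u n.
have avg : \sum_(0 <= m < K) q * (1 - u m) <= \sum_(0 <= m < K) T.
  apply: ler_sum_nat => m /andP[_ mK]; apply: sum_tail_ge_skip => // [|n nm].
    exact: leq_trans (ltnW mK) KN.
  exact/qu/(ltn_trans nm).
rewrite -mulr_sumr sumrB !sumr_const_nat subn0 -(mulr_natr T) in avg.
have K_gt0 : 0 < K%:R :> R by rewrite ltr0n.
have qK : q * (K%:R - 1) <= T * K%:R.
  apply: le_trans avg; apply: ler_wpM2l => //.
  by rewrite lerD2l lerN2 sum_prefix_le1 // (leq_trans KN).
have -> : q * (1 - K%:R^-1) = q * (K%:R - 1) / K%:R by field; rewrite gt_eqF.
by rewrite ler_pdivrMr.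
Qed.

Section ConstantDeathRate.
Variables (b : nat -> R) (m : R).
Hypothesis (balance : forall n, (n < N)%N -> u n.+1 * m = u n * b n).

Lemma flow_tailE : m * \sum_(1 <= n < N.+1) u n = \sum_(0 <= n < N) u n * b n.
Proof.
rewrite big_add1 /= mulr_sumr; apply: eq_big_nat => n /andP[_ nN].
by rewrite mulrC balance.
Qed.

Lemma flow_tail_le (B : R) : 0 <= B -> (forall n, (n < N)%N -> b n <= B) ->
  m * \sum_(1 <= n < N.+1) u n <= B.
Proof.
move=> B0 bB; rewrite flow_tailE.
apply: (@le_trans _ _ (\sum_(0 <= n < N) u n * B)).
  by apply: ler_sum_nat => n /andP[_ nN]; rewrite ler_wpM2l ?bB // u_ge0 // ltnW.
by rewrite -mulr_suml ler_piMl // sum_prefix_le1.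
Qed.

Lemma flow_tail_ge (x : R) K : 0 < m -> x <= m -> (0 < K <= N)%N ->
  (forall n, (n < K)%N -> x <= b n) ->
  x * (1 - K%:R^-1) <= m * \sum_(1 <= n < N.+1) u n.
Proof.
move=> m_gt0 xm KN xb; have /andP[K_gt0 K_le] := KN.
have [x_le0 | x_gt0] := lerP x 0.
  have T_ge0 : 0 <= \sum_(1 <= n < N.+1) u n.
    by rewrite big_nat_cond sumr_ge0 // => n /andP[/andP[_ /u_ge0]].
  apply: le_trans (mulr_ge0 (ltW m_gt0) T_ge0).
  by rewrite mulr_le0_ge0 // subr_ge0 invf_le1 ?ler1n ?ltr0n.
rewrite -[x](divfK (lt0r_neq0 m_gt0)) mulrAC mulrC ler_pM2l //.
apply: sum_tail_ge KN _ => [|n nK].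
  by rewrite ler_pdivrMr // mul1r xm andbT divr_ge0 // ltW.
have nN : (n < N)%N := leq_trans nK K_le.
rewrite -(ler_pM2r m_gt0) balance // mulrAC divfK ?lt0r_neq0 //.
by rewrite mulrC ler_wpM2l ?xb // u_ge0 // ltnW.
Qed.

End ConstantDeathRate.

End ProbabilityVector.

Lemma cvgy_squeeze (R : realType) (f : R -> R) (l : R) :
  (forall e, 0 < e -> \forall x \near +oo, l - e <= f x <= l) ->
  f x @[x --> +oo] --> l.
Proof.
move=> fl; apply/cvgrPdist_le => e /fl; apply: filterS => x /andP[lo up].
by rewrite ler_norml; apply/andP; split; lra.
Qed.

Section CDN.
Variables (R : realType) (lam mu A psi : R).
Hypotheses (lam_gt0 : 0 < lam) (mu_gt0 : 0 < mu) (A_gt0 : 0 < A) (psi_gt0 : 0 < psi).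

Lemma capN_le c : 0 <= c -> (capN mu psi c)%:R <= psi * c * mu.
Proof.
move=> c_ge0; rewrite /capN; case: ifP => [x_gt0 | _]; last by rewrite !mulr_ge0 // ltW.
have : -1 < psi * c * mu - 1 by lra.
rewrite -ceil_ge0; have := ceilB1_lt (psi * c * mu - 1).
by case: (Num.ceil _) => // n; rewrite intrB -[(Posz n)%:~R]/(n%:R); lra.
Qed.

Lemma capN_ge c K : K%:R + 1 < psi * c * mu -> (K <= capN mu psi c)%N.
Proof.
move=> Kc; rewrite /capN ifT; last by have : 0 <= K%:R :> R by []; lra.
have : K%:R < psi * c * mu - 1 by lra.
rewrite -[K%:R]/(K%:~R : R) -ceil_gt_int.
by case: (Num.ceil _) => [n|n] //; rewrite ltz_nat => /ltnW.
Qed.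

Lemma near_mul_ge (x e : R) : 0 < e -> \forall c \near +oo, x <= c * e.
Proof.
move=> e_gt0; apply: filterS (nbhs_pinfty_ge (num_real (x / e))) => c.
by rewrite ler_pdivrMr.
Qed.

Lemma near_capN_ge K : \forall c \near +oo, (K <= capN mu psi c)%N.
Proof.
apply: filterS (near_mul_ge (K%:R + 2) (mulr_gt0 psi_gt0 mu_gt0)) => c Kc.
by apply: capN_ge; lra.
Qed.

Let a := lam / A * pi.
(* From (psi - h)^2 >= psi^2 - 2 psi h with h = (n+1) / (c mu): the shrinking
   routing radius costs at most C (n+1) of birth rate, uniformly in c. *)
Let C := 2 * a * psi / mu.

Lemma a_gt0 : 0 < a.
Proof. by rewrite !mulr_gt0 ?invr_gt0 ?pi_gt0. Qed.

Lemma a_psi2_gt0 : 0 < a * psi ^+ 2.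
Proof. by rewrite mulr_gt0 ?a_gt0 ?exprn_gt0. Qed.

Lemma birthE c n : (n < capN mu psi c)%N ->
  birth lam mu A psi c n = c * a * (psi - n.+1%:R / (c * mu)) ^+ 2.
Proof. by move=> nN; rewrite /birth nN /lamc /muc /a !mulrA. Qed.

Lemma birth_le c n : 0 < c -> birth lam mu A psi c n <= c * (a * psi ^+ 2).
Proof.
move=> c_gt0; have [nN | Nn] := ltnP n (capN mu psi c); last first.
  by rewrite /birth ltnNge Nn /= ltW // mulr_gt0 // a_psi2_gt0.
rewrite birthE // -mulrA ler_pM2l // ler_pM2l ?a_gt0 //.
have cmu_gt0 : 0 < c * mu by rewrite mulr_gt0.
have h_le : n.+1%:R / (c * mu) <= psi.
  rewrite ler_pdivrMr // mulrA; apply: le_trans (capN_le (ltW c_gt0)).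
  by rewrite ler_nat.
rewrite ler_sqr ?nnegrE ?subr_ge0 ?(ltW psi_gt0) //.
by rewrite gerBl divr_ge0 // ltW.
Qed.

Lemma birth_ge c n : 0 < c -> (n < capN mu psi c)%N ->
  c * (a * psi ^+ 2) - C * n.+1%:R <= birth lam mu A psi c n.
Proof.
move=> c_gt0 nN; rewrite birthE //; set h := n.+1%:R / (c * mu).
have -> : c * (a * psi ^+ 2) - C * n.+1%:R = c * a * (psi ^+ 2 - 2 * psi * h).
  by rewrite /C /h; field; rewrite !gt_eqF.
rewrite ler_wpM2l ?(mulr_ge0 (ltW c_gt0) (ltW a_gt0)) // sqrrB.
by have := sqr_ge0 h; lra.
Qed.

Let Jlim := Num.min (a * psi ^+ 2) mu.

Lemma C_ge0 : 0 <= C.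
Proof. by rewrite ltW // divr_gt0 // mulr_gt0 // mulr_gt0 // a_gt0. Qed.

Lemma Jub_bounds c : 0 < c -> (0 < capN mu psi c)%N ->
  c * Jlim - C <= Jub lam mu A psi c <= c * Jlim.
Proof.
move=> c_gt0 N_gt0; rewrite /Jlim (minr_pMr _ _ (ltW c_gt0)) /Jub /muc.
rewrite le_min2 ?birth_le ?lexx // andbT le_min; apply/andP; split.
  by apply: le_trans (birth_ge c_gt0 N_gt0); rewrite mulr1 lerD2r ge_min lexx.
have : Num.min (c * (a * psi ^+ 2)) (c * mu) <= c * mu by rewrite ge_min lexx orbT.
by have := C_ge0; lra.
Qed.

Lemma throughput_bounds c p K : 0 < c -> stationary lam mu A psi c p ->
  (0 < K <= capN mu psi c)%N ->
  (c * Jlim - C * K%:R) * (1 - K%:R^-1) <= throughput mu psi c p <= c * Jlim.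
Proof.
move=> c_gt0 [p_ge0 [p_sum1 global]] KN; have /andP[_ K_le] := KN.
have balance n : (n < capN mu psi c)%N ->
    p n.+1 * (c * mu) = p n * birth lam mu A psi c n.
  exact: (detailed_balance (d := death mu c) _ global).
have cmu_gt0 : 0 < c * mu by rewrite mulr_gt0.
have cJlim_le : c * Jlim <= c * (a * psi ^+ 2) /\ c * Jlim <= c * mu.
  by rewrite /Jlim (minr_pMr _ _ (ltW c_gt0)) !ge_min !lexx orbT.
rewrite /throughput /muc; apply/andP; split.
  apply: (flow_tail_ge p_ge0 p_sum1 balance) => // [|n nK].
    by have := C_ge0; have := ler0n R K; nra.
  apply: le_trans (birth_ge c_gt0 (leq_trans nK K_le)).
  rewrite lerB //; first by case: cJlim_le.
  by rewrite ler_wpM2l ?C_ge0 // ler_nat.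
rewrite /Jlim (minr_pMr _ _ (ltW c_gt0)) le_min; apply/andP; split.
  apply: (flow_tail_le p_ge0 p_sum1 balance); first by rewrite ltW // mulr_gt0 // a_psi2_gt0.
  by move=> n _; apply: birth_le.
rewrite -[X in _ <= X]mulr1 ler_wpM2l ?(ltW cmu_gt0) //.
by rewrite sum_tailE // gerBl p_ge0.
Qed.

Lemma Jub_div_near e : 0 < e ->
  \forall c \near +oo, Jlim - e <= Jub lam mu A psi c / c <= Jlim.
Proof.
move=> e_gt0; near=> c.
have c_gt0 : 0 < c by near: c; apply: nbhs_pinfty_gt; rewrite num_real.
have N_gt0 : (0 < capN mu psi c)%N by near: c; exact: near_capN_ge.
have Ce : C <= c * e by near: c; exact: near_mul_ge.
have /andP[lo up] := Jub_bounds c_gt0 N_gt0.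
rewrite ler_pdivlMr // ler_pdivrMr // mulrBl ![_ * c]mulrC; lra.
Unshelve. all: by end_near. Qed.

Lemma throughput_div_near (p : R -> nat -> R) e :
  (forall c, 1 <= c -> stationary lam mu A psi c (p c)) -> 0 < e ->
  \forall c \near +oo, Jlim - e <= throughput mu psi c (p c) / c <= Jlim.
Proof.
move=> p_stat e_gt0; set K := (Num.truncn (Jlim / (e / 2))).+1.
have K_gt0 : 0 < K%:R :> R by rewrite ltr0n.
have Jlim_ge0 : 0 <= Jlim by rewrite le_min !ltW ?a_psi2_gt0.
have JK : Jlim * K%:R^-1 <= e / 2.
  rewrite ler_pdivrMr // mulrC -ler_pdivrMr ?divr_gt0 //.
  exact/ltW/truncnS_gt.
have w_ge0 : 0 <= K%:R^-1 :> R by rewrite invr_ge0 ltW.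
near=> c.
have c_ge1 : 1 <= c by near: c; apply: nbhs_pinfty_ge; rewrite num_real.
have c_gt0 : 0 < c by lra.
have KN : (0 < K <= capN mu psi c)%N by rewrite /=; near: c; exact: near_capN_ge.
have CK : C * K%:R <= c * (e / 2) by near: c; apply: near_mul_ge; rewrite divr_gt0.
have /andP[lo up] := throughput_bounds c_gt0 (p_stat c c_ge1) KN.
rewrite ler_pdivlMr // ler_pdivrMr // [Jlim * c]mulrC andbC up /=.
apply: le_trans lo.
have cJK : c * (Jlim * K%:R^-1) <= c * (e / 2) := ler_wpM2l (ltW c_gt0) JK.
have CKw : 0 <= C * K%:R * K%:R^-1 := mulr_ge0 (mulr_ge0 C_ge0 (ler0n _ _)) w_ge0.
have -> : (c * Jlim - C * K%:R) * (1 - K%:R^-1)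
  = c * Jlim - c * (Jlim * K%:R^-1) - C * K%:R + C * K%:R * K%:R^-1 by ring.
lra.
Unshelve. all: by end_near. Qed.

Lemma Jub_div_cvg : Jub lam mu A psi c / c @[c --> +oo] --> Jlim.
Proof. by apply: cvgy_squeeze => e; apply: Jub_div_near. Qed.

Lemma throughput_div_cvg (p : R -> nat -> R) :
  (forall c, 1 <= c -> stationary lam mu A psi c (p c)) ->
  throughput mu psi c (p c) / c @[c --> +oo] --> Jlim.
Proof. by move=> p_stat; apply: cvgy_squeeze => e; apply: throughput_div_near. Qed.

End CDN.

Theorem lemma7 (R : realType) (lam mu A psi : R)
  (hlam : 0 < lam) (hmu : 0 < mu) (hA : 0 < A) (hpsi : 0 < psi)
  (hdisc : pi * psi ^+ 2 <= A)
  (p : R -> nat -> R)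
  (hp : forall c, 1 <= c -> stationary lam mu A psi c (p c)) :
  exists l : R,
    (Jub lam mu A psi c / c @[c --> +oo] --> l) /\
    (throughput mu psi c (p c) / c @[c --> +oo] --> l).
Proof.
eexists; split; first exact: Jub_div_cvg.
exact: throughput_div_cvg.
Qed.
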